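(* Let $L\ge 1$ and $n_1,\dots,n_L\ge 1$ be integers, $N=\sum_l n_l$, and write vectors in $\mathbb{R}^N$ in blocks $x=[x_1^\top,\dots,x_L^\top]^\top$, $x_l\in\mathbb{R}^{n_l}$. Let $g,v\in\mathbb{R}^N$ and $d\in\mathbb{R}^N$ with positive entries, $D=\mathrm{Diag}(d)$, and set $w_l=v_l-g_l\oslash d_l$. Assume each $w_l$ has at least one positive and at least one negative entry. Consider $$\min_{u,\alpha,\beta}\; g^\top(u-v)+\tfrac12(u-v)^\top D(u-v)\quad\text{s.t.}\quad u_l\in\{-\beta_l,0,\alpha_l\}^{n_l},\ \alpha_l>0,\ \beta_l>0,\ l=1,\dots,L.$$ If $(u,\alpha,\beta)$ is a minimizer, then for every $l$, $$u_l=\alpha_l p_l+\beta_l q_l,\qquad p_l=I^+_{\alpha_l/2}(w_l),\quad q_l=I^-_{\beta_l/2}(w_l),$$ $$\alpha_l=\frac{\|p_l\odot d_l\odot w_l\|_1}{\|p_l\odot d_l\|_1},\qquad \beta_l=\frac{\|q_l\odot d_l\odot w_l\|_1}{\|q_l\odot d_l\|_1}.$$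
   Context: $\odot$ and $\oslash$ are element-wise multiplication and division; $\mathrm{Diag}(x)$ is the diagonal matrix with diagonal $x$. For a threshold $\Delta$: $[I^+_\Delta(x)]_i=1$ if $x_i>\Delta$ and $0$ otherwise; $[I^-_\Delta(x)]_i=-1$ if $x_i<-\Delta$ and $0$ otherwise. *)

(* Vectors in R^N, N = sum_l n_l, are represented blockwise
   as families  x : forall l : 'I_L, 'rV[R]_(n l). *)
From mathcomp Require Import all_boot all_order all_algebra.
From mathcomp Require Import reals.
Set Implicit Arguments. Unset Strict Implicit. Unset Printing Implicit Defensive.
Import Order.TTheory GRing.Theory Num.Theory.
Local Open Scope ring_scope.

Section Defs.
Variable R : realType.

Definition hmul k (x y : 'rV[R]_k) : 'rV[R]_k := \row_i (x 0 i * y 0 i).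
Definition hdiv k (x y : 'rV[R]_k) : 'rV[R]_k := \row_i (x 0 i / y 0 i).

Definition Ipos k (Delta : R) (x : 'rV[R]_k) : 'rV[R]_k :=
  \row_i (if Delta < x 0 i then 1 else 0).
Definition Ineg k (Delta : R) (x : 'rV[R]_k) : 'rV[R]_k :=
  \row_i (if x 0 i < - Delta then -1 else 0).

Definition norm1 k (x : 'rV[R]_k) : R := \sum_i `|x 0 i|.

Definition objective L (n : 'I_L -> nat) (g v d u : forall l : 'I_L, 'rV[R]_(n l)) : R :=
  \sum_(l < L) \sum_(i < n l)
     (g l 0 i * (u l 0 i - v l 0 i)
      + 2^-1 * (d l 0 i * (u l 0 i - v l 0 i) ^+ 2)).

Definition feasible L (n : 'I_L -> nat) (u : forall l : 'I_L, 'rV[R]_(n l))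
    (alpha beta : 'I_L -> R) : Prop :=
  forall l : 'I_L, 0 < alpha l /\ 0 < beta l /\
    forall i : 'I_(n l), u l 0 i \in [:: - beta l; 0; alpha l].

End Defs.

(* Completing the square, the objective is 1/2 sum_l sum_i d_i (u_i - w_i)^2
   up to a constant, so the blocks decouple and each (u_l, alpha_l, beta_l)
   minimizes the d-weighted squared distance to w_l over ternary vectors.
   For fixed levels every coordinate picks the nearest of -beta, 0, alpha, so
   u_i = alpha forces w_i >= alpha/2 and w_i > alpha/2 forces u_i = alpha.
   For a fixed pattern the cost is a quadratic in alpha minimized at an
   interior point, hence sum_{u_i = alpha} d_i (alpha - w_i) = 0: alpha is the
   d-weighted mean of those w_i.  A tie w_i = alpha/2 is excluded because
   moving u_i to 0 would give a second minimizer whose stationarity equation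
   differs from the first by d_i (alpha - w_i) <> 0.  The statements about
   beta follow by the symmetry (u, w, alpha, beta) -> (-u, -w, beta, alpha). *)

From mathcomp Require Import all_boot all_order all_algebra.
From mathcomp Require Import reals.
From mathcomp Require Import ring lra.
Set Implicit Arguments. Unset Strict Implicit. Unset Printing Implicit Defensive.
Import Order.TTheory GRing.Theory Num.Theory.
Local Open Scope ring_scope.

Lemma quad_min_stationary (R : realFieldType) (a A B : R) : 0 < a -> 0 <= B ->
  (forall s, - a < s -> 0 <= 2 * s * A + s ^+ 2 * B) -> A = 0.
Proof.
move=> a_gt0 B_ge0 hmin; apply/eqP/negPn/negP => A_neq0.
(* For s = - A t the quadratic is A^2 t (t B - 2) < 0, and s > - a once A t < a. *)
have den_gt0 : 0 < a * (B + 1) + `|A|.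
  by rewrite ltr_wpDr // mulr_gt0 // ltr_wpDl.
pose t := a / (a * (B + 1) + `|A|).
have t_gt0 : 0 < t by rewrite divr_gt0.
have tB_lt1 : t * B < 1.
  rewrite mulrAC ltr_pdivrMr // mul1r; have := normr_ge0 A; nra.
have At_lt : A * t < a.
  rewrite mulrA ltr_pdivrMr //; have := ler_norm A; nra.
have A2t_gt0 : 0 < A ^+ 2 * t by rewrite mulr_gt0 // exprn_even_gt0 // A_neq0.
have := hmin (- (A * t)); nra.
Qed.

Section TernaryBlock.
Variables (R : realFieldType) (m : nat).

Definition ternary (a b : R) (x : 'rV[R]_m) := forall i, x 0 i \in [:: - b; 0; a].

Lemma ternaryN a b x : ternary a b x -> ternary b a (- x).
Proof.
by move=> tx i; move: (tx i); rewrite !mxE !inE => /or3P[] /eqP ->;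
  rewrite ?opprK ?oppr0 eqxx ?orbT.
Qed.

Definition row_set (y : 'rV[R]_m) i c : 'rV[R]_m := \row_j (if j == i then c else y 0 j).

Lemma row_set_id y i c : row_set y i c 0 i = c.
Proof. by rewrite mxE eqxx. Qed.

Lemma row_set_out y i c j : j != i -> row_set y i c 0 j = y 0 j.
Proof. by rewrite mxE => /negbTE ->. Qed.

Lemma ternary_set a b y i c :
  ternary a b y -> c \in [:: - b; 0; a] -> ternary a b (row_set y i c).
Proof. by move=> ty hc j; rewrite mxE; case: eqP. Qed.

Lemma sumrB_except (F G : 'I_m -> R) i : (forall j, j != i -> F j = G j) ->
  \sum_j F j - \sum_j G j = F i - G i.
Proof.
move=> FG; rewrite -sumrB (bigD1 i) //= big1 ?addr0 // => j /FG ->.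
exact: subrr.
Qed.

Variables (d w : 'rV[R]_m).

Definition wsqdist (x : 'rV[R]_m) := \sum_i d 0 i * (x 0 i - w 0 i) ^+ 2.

Definition ternary_argmin (y : 'rV[R]_m) (a b : R) :=
  [/\ 0 < a, 0 < b, ternary a b y &
      forall x a' b', 0 < a' -> 0 < b' -> ternary a' b' x -> wsqdist y <= wsqdist x].

Lemma wsqdist_row_set y i c : wsqdist (row_set y i c) - wsqdist y =
  d 0 i * ((c - w 0 i) ^+ 2 - (y 0 i - w 0 i) ^+ 2).
Proof.
rewrite /wsqdist (sumrB_except (i := i)) => [|j ji]; last by rewrite row_set_out.
by rewrite row_set_id mulrBr.
Qed.

Hypothesis d_gt0 : forall i, 0 < d 0 i.

Lemma ternary_argmin_coord y a b i c a' b' : ternary_argmin y a b ->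
  0 < a' -> 0 < b' -> ternary a' b' (row_set y i c) ->
  (y 0 i - w 0 i) ^+ 2 <= (c - w 0 i) ^+ 2.
Proof.
case=> _ _ _ ymin a'_gt0 b'_gt0 tx.
have := ymin _ _ _ a'_gt0 b'_gt0 tx.
by rewrite -subr_ge0 wsqdist_row_set pmulr_rge0 // subr_ge0.
Qed.

Lemma ternary_argmin_stationary y a b : ternary_argmin y a b ->
  \sum_i (if y 0 i == a then d 0 i * (a - w 0 i) else 0) = 0.
Proof.
case=> a_gt0 b_gt0 ty ymin.
set A := \sum_i _; pose B := \sum_i (if y 0 i == a then d 0 i else 0).
apply: (@quad_min_stationary _ a _ B) => //.
  by apply: sumr_ge0 => i _; case: ifP => // _; exact: ltW.
move=> s s_gt; pose x := \row_j (if y 0 j == a then a + s else y 0 j).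
have tx : ternary (a + s) b x.
  move=> j; rewrite mxE; case: ifP => [_|ya]; first by rewrite !inE eqxx !orbT.
  by move: (ty j) ya; rewrite !inE => /or3P[] /eqP ->; rewrite ?eqxx ?orbT.
suff <- : wsqdist x - wsqdist y = 2 * s * A + s ^+ 2 * B.
  by rewrite subr_ge0 (ymin _ (a + s) b) // -ltrBlDl sub0r.
rewrite /wsqdist -sumrB !mulr_sumr -big_split; apply: eq_bigr => i _ /=.
by rewrite mxE; case: ifP => [/eqP ->|_]; [ring | rewrite subrr !mulr0 addr0].
Qed.

Lemma ternary_argmin_attained y a b : ternary_argmin y a b -> (exists k, 0 < w 0 k) ->
  exists j, y 0 j = a.
Proof.
move=> ymin [k wk_gt0]; have [_ b_gt0 ty _] := ymin.
case: (pickP (fun j => y 0 j == a)) => [j /eqP|no_a]; first by exists j.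
(* No coordinate sits at level a, so the level is free: move it to w_k. *)
have tx : ternary (w 0 k) b (row_set y k (w 0 k)).
  apply: ternary_set; last by rewrite !inE eqxx !orbT.
  by move=> j; move: (ty j) (no_a j); rewrite !inE => /or3P[] /eqP ->; rewrite ?eqxx ?orbT.
have := ternary_argmin_coord ymin wk_gt0 b_gt0 tx; rewrite subrr expr0n /= => yk_le0.
exfalso; move: (ty k) (no_a k) yk_le0; rewrite !inE => /or3P[] /eqP -> //; nra.
Qed.

Lemma ternary_argmin_posE y a b i : ternary_argmin y a b -> (y 0 i == a) = (a / 2 < w 0 i).
Proof.
move=> ymin; have [a_gt0 b_gt0 ty ymin_le] := ymin.
have coord c : c \in [:: - b; 0; a] -> (y 0 i - w 0 i) ^+ 2 <= (c - w 0 i) ^+ 2.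
  by move=> hc; apply: ternary_argmin_coord ymin a_gt0 b_gt0 (ternary_set i ty hc).
have /coord to0 : 0 \in [:: - b; 0; a] by rewrite !inE eqxx orbT.
have /coord toa : a \in [:: - b; 0; a] by rewrite !inE eqxx !orbT.
have d_i_gt0 := d_gt0 i; apply/eqP/idP => [ya | w_gt]; last first.
  move: (ty i) to0 toa; rewrite !inE => /or3P[] /eqP -> // _.
    have : 0 < (b + 2 * w 0 i - a) * (a + b) by apply: mulr_gt0; lra.
    nra.
  have : 0 < a * (2 * w 0 i - a) by apply: mulr_gt0; lra.
  nra.
rewrite ya in to0; rewrite lt_neqAle; apply/andP; split; last by nra.
apply/eqP => w_tie.
(* At a tie, y with coordinate i moved to 0 is another minimizer. *)
pose x := row_set y i 0.
have x_eq : wsqdist x = wsqdist y.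
  by apply/eqP; rewrite -subr_eq0 wsqdist_row_set ya -w_tie; apply/eqP; field.
have xmin : ternary_argmin x a b.
  split=> // [|z a' b' a'_gt0 b'_gt0 tz].
    by apply: ternary_set; rewrite ?inE ?eqxx ?orbT.
  by rewrite x_eq; apply: ymin_le tz.
have : \sum_j (if y 0 j == a then d 0 j * (a - w 0 j) else 0)
    - \sum_j (if x 0 j == a then d 0 j * (a - w 0 j) else 0) = d 0 i * (a - w 0 i).
  rewrite (sumrB_except (i := i)) => [|j ji]; last by rewrite row_set_out.
  by rewrite row_set_id ya eqxx (lt_eqF a_gt0) subr0.
rewrite (ternary_argmin_stationary ymin) (ternary_argmin_stationary xmin) subrr.
have : 0 < d 0 i * (a - w 0 i) by apply: mulr_gt0; lra.
lra.
Qed.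

End TernaryBlock.

Lemma wsqdistN (R : realFieldType) m (d w x : 'rV[R]_m) :
  wsqdist d (- w) x = wsqdist d w (- x).
Proof. by apply: eq_bigr => i _; rewrite !mxE; congr (_ * _); ring. Qed.

Lemma ternary_argminN (R : realFieldType) m (d w y : 'rV[R]_m) a b :
  ternary_argmin d w y a b -> ternary_argmin d (- w) (- y) b a.
Proof.
case=> a_gt0 b_gt0 ty ymin; split=> // [|x b' a' b'_gt0 a'_gt0 tx].
  exact: ternaryN.
by rewrite !wsqdistN opprK; apply: ymin a'_gt0 b'_gt0 (ternaryN tx).
Qed.

Section ThresholdIndicators.
Variables (R : realType) (m : nat).
Implicit Types (x y d w : 'rV[R]_m).

Lemma hmulNl x y : hmul (- x) y = - hmul x y.
Proof. by apply/rowP => i; rewrite !mxE mulNr. Qed.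

Lemma hmulNr x y : hmul x (- y) = - hmul x y.
Proof. by apply/rowP => i; rewrite !mxE mulrN. Qed.

Lemma norm1N x : norm1 (- x) = norm1 x.
Proof. by apply: eq_bigr => i _; rewrite mxE normrN. Qed.

Lemma Ineg_Ipos (D : R) w : Ineg D w = - Ipos D (- w).
Proof. by apply/rowP => i; rewrite !mxE ltrNr; case: ifP; rewrite ?oppr0. Qed.

Lemma ternary_decomp (a b : R) y w : 0 < a -> 0 < b -> ternary a b y ->
  (forall i, (y 0 i == a) = (a / 2 < w 0 i)) ->
  (forall i, (y 0 i == - b) = (w 0 i < - (b / 2))) ->
  y = a *: Ipos (a / 2) w + b *: Ineg (b / 2) w.
Proof.
move=> a_gt0 b_gt0 ty posE negE; apply/rowP => i; rewrite !mxE -posE -negE.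
by move: (ty i); rewrite !inE => /or3P[] /eqP ->; rewrite ?eqxx; do ?case: eqP => *; lra.
Qed.

Lemma Ipos_weighted_mean (a : R) d w : 0 < a -> (forall i, 0 < d 0 i) ->
  (exists i, a / 2 < w 0 i) ->
  \sum_i (if a / 2 < w 0 i then d 0 i * (a - w 0 i) else 0) = 0 ->
  a = norm1 (hmul (hmul (Ipos (a / 2) w) d) w) / norm1 (hmul (Ipos (a / 2) w) d).
Proof.
move=> a_gt0 d_gt0 [j wj] stationary.
set B := \sum_i (if a / 2 < w 0 i then d 0 i else 0).
have denE : norm1 (hmul (Ipos (a / 2) w) d) = B.
  apply: eq_bigr => i _; rewrite !mxE; case: ifP => _; last by rewrite mul0r normr0.
  by rewrite mul1r ger0_norm // ltW.
have numE : norm1 (hmul (hmul (Ipos (a / 2) w) d) w) = a * B.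
  transitivity (\sum_i (if a / 2 < w 0 i then d 0 i * w 0 i else 0)).
    apply: eq_bigr => i _; rewrite !mxE; case: ifP => wi; last by rewrite !mul0r normr0.
    by rewrite mul1r ger0_norm // mulr_ge0 //; [exact: ltW | lra].
  apply/eqP; rewrite eq_sym -subr_eq0 -[X in _ == X]stationary /B mulr_sumr -sumrB.
  by apply/eqP/eq_bigr => i _; case: ifP => _; [ring | rewrite mulr0 subr0].
have B_gt0 : 0 < B.
  rewrite /B (bigD1 j) //= wj ltr_pwDl //.
  by apply: sumr_ge0 => i _; case: ifP => // _; exact: ltW.
by rewrite denE numE mulfK // gt_eqF.
Qed.

Lemma ternary_argmin_Ipos d w y a b : (forall i, 0 < d 0 i) ->
  ternary_argmin d w y a b -> (exists k, 0 < w 0 k) ->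
  a = norm1 (hmul (hmul (Ipos (a / 2) w) d) w) / norm1 (hmul (Ipos (a / 2) w) d).
Proof.
move=> d_gt0 ymin w_pos; have [a_gt0 _ _ _] := ymin.
have posE i := ternary_argmin_posE d_gt0 i ymin.
apply: Ipos_weighted_mean => //.
  by have [j yj] := ternary_argmin_attained d_gt0 ymin w_pos; exists j; rewrite -posE yj.
rewrite -[RHS](ternary_argmin_stationary d_gt0 ymin).
by apply: eq_bigr => i _; rewrite posE.
Qed.

Lemma ternary_argmin_Ineg d w y a b : (forall i, 0 < d 0 i) ->
  ternary_argmin d w y a b -> (exists k, w 0 k < 0) ->
  b = norm1 (hmul (hmul (Ineg (b / 2) w) d) w) / norm1 (hmul (Ineg (b / 2) w) d).
Proof.
move=> d_gt0 ymin [k wk_lt0].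
rewrite Ineg_Ipos !hmulNl -[- hmul (hmul _ _) w]hmulNr !norm1N.
apply: ternary_argmin_Ipos d_gt0 (ternary_argminN ymin) _.
by exists k; rewrite mxE oppr_gt0.
Qed.

End ThresholdIndicators.

Section Blocks.
Variables (R : realType) (L : nat) (n : 'I_L -> nat).
Variables (g v d : forall l : 'I_L, 'rV[R]_(n l)).
Hypothesis d_gt0 : forall l i, 0 < d l 0 i.

Lemma objectiveE u : objective g v d u =
  2^-1 * \sum_l wsqdist (d l) (v l - hdiv (g l) (d l)) (u l)
  - \sum_l \sum_i g l 0 i ^+ 2 / (2 * d l 0 i).
Proof.
rewrite /objective mulr_sumr -sumrB; apply: eq_bigr => l _.
rewrite mulr_sumr -sumrB; apply: eq_bigr => i _; rewrite !mxE.
by field; rewrite gt_eqF.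
Qed.

Lemma objective_argmin_block u alpha beta : feasible u alpha beta ->
  (forall u' alpha' beta', feasible u' alpha' beta' ->
     objective g v d u <= objective g v d u') ->
  forall l, ternary_argmin (d l) (v l - hdiv (g l) (d l)) (u l) (alpha l) (beta l).
Proof.
move=> feas umin l; have [alpha_gt0 [beta_gt0 tu]] := feas l.
split=> // x a b a_gt0 b_gt0 tx.
have feas' : feasible (dfwith u x) (dfwith (i := l) alpha a) (dfwith (i := l) beta b).
  rewrite /feasible => l'; case: (eqVneq l l') => [<-|ll']; first by rewrite !dfwith_in.
  by rewrite !dfwith_out.
have := umin _ _ _ feas'; rewrite !objectiveE lerD2r ler_pM2l ?invr_gt0 // -subr_ge0.
rewrite (sumrB_except (i := l)) ?dfwith_in ?subr_ge0 // => l' l'l.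
by rewrite dfwith_out // eq_sym.
Qed.

End Blocks.

Theorem proposition4 (R : realType) (L : nat) (n : 'I_L -> nat)
    (g v d : forall l : 'I_L, 'rV[R]_(n l))
    (hL : (1 <= L)%N) (hn : forall l, (1 <= n l)%N)
    (hd : forall l i, 0 < d l 0 i)
    (hw : forall l, let w := v l - hdiv (g l) (d l) in
          (exists i, 0 < w 0 i) /\ (exists i, w 0 i < 0))
    (u : forall l : 'I_L, 'rV[R]_(n l)) (alpha beta : 'I_L -> R)
    (hfeas : feasible u alpha beta)
    (hmin : forall (u' : forall l : 'I_L, 'rV[R]_(n l)) (alpha' beta' : 'I_L -> R),
        feasible u' alpha' beta' -> objective g v d u <= objective g v d u') :
  forall l : 'I_L,
    let w := v l - hdiv (g l) (d l) in
    let p := Ipos (alpha l / 2) w in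
    let q := Ineg (beta l / 2) w in
    u l = alpha l *: p + beta l *: q /\
    alpha l = norm1 (hmul (hmul p (d l)) w) / norm1 (hmul p (d l)) /\
    beta l = norm1 (hmul (hmul q (d l)) w) / norm1 (hmul q (d l)).
Proof.
move=> l w p q; have [w_pos w_neg] := hw l.
have umin : ternary_argmin (d l) w (u l) (alpha l) (beta l).
  by rewrite /w; apply: objective_argmin_block.
have [alpha_gt0 beta_gt0 tu _] := umin.
have posE i := ternary_argmin_posE (hd l) i umin.
have negE i : (u l 0 i == - beta l) = (w 0 i < - (beta l / 2)).
  have := ternary_argmin_posE (hd l) i (ternary_argminN umin).
  by rewrite !mxE eqr_oppLR ltrNr.
split; first exact: ternary_decomp.
split; first exact: ternary_argmin_Ipos (hd l) umin w_pos.
exact: ternary_argmin_Ineg (hd l) umin w_neg.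
Qed.
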